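(* Let $\mathit{VI}$ be a finite set of variables with $\#\mathit{VI}=n$, let $sh_1,sh_2\in\mathit{SH}$ and $1\le k\le n$. If $\rho_{\mathit{TSD}_k}(sh_1)=\rho_{\mathit{TSD}_k}(sh_2)$ then, for each $\sigma\in\mathit{Subst}$, each $sh'\in\mathit{SH}$ and each $V\in\wp(\mathit{VI})$: $\rho_{\mathit{TSD}_k}(\mathrm{amgu}(sh_1,\sigma))=\rho_{\mathit{TSD}_k}(\mathrm{amgu}(sh_2,\sigma))$, $\rho_{\mathit{TSD}_k}(sh'\cup sh_1)=\rho_{\mathit{TSD}_k}(sh'\cup sh_2)$, and $\rho_{\mathit{TSD}_k}(\mathrm{proj}(sh_1,V))=\rho_{\mathit{TSD}_k}(\mathrm{proj}(sh_2,V))$.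
   Context: $\mathit{SG}=\wp(\mathit{VI})\setminus\{\emptyset\}$ and $\mathit{SH}=\wp(\mathit{SG})$. $\rho_{\mathit{TSD}_k}(sh)=\{\,S\in\mathit{SG}\mid \forall T\subseteq S:\ \#T<k\implies S=\bigcup\{U\in sh\mid T\subseteq U\subseteq S\}\,\}$. Terms are first-order terms over variables; $\mathrm{vars}(t)$ is the set of variables of $t$. A binding is $x\mapsto t$ with $x$ a variable and $t\ne x$ a term; $\mathit{Subst}$ is the set of idempotent substitutions (finite sets of bindings), here with all variables in $\mathit{VI}$. Operations on $\mathit{SH}$: $\mathrm{bin}(sh_1,sh_2)=\{S_1\cup S_2\mid S_1\in sh_1,S_2\in sh_2\}$; $sh^\star=\{S\in\mathit{SG}\mid\exists sh'\subseteq sh: S=\bigcup sh'\}$; $\mathrm{rel}(V,sh)=\{S\in sh\mid S\cap V\ne\emptyset\}$; for a binding $x\mapsto t$ with $v_x=\{x\}$, $v_t=\mathrm{vars}(t)$, $v_{xt}=v_x\cup v_t$: $\mathrm{amgu}(sh,x\mapsto t)=(sh\setminus\mathrm{rel}(v_{xt},sh))\cup\mathrm{bin}(\mathrm{rel}(v_x,sh)^\star,\mathrm{rel}(v_t,sh)^\star)$; extended to substitutions by $\mathrm{amgu}(sh,\emptyset)=sh$ and $\mathrm{amgu}(sh,\{x\mapsto t\}\cup\sigma)=\mathrm{amgu}(\mathrm{amgu}(sh,x\mapsto t),\sigma\setminus\{x\mapsto t\})$. Projection: $\mathrm{proj}(sh,V)=\{S\cap V\mid S\in sh, S\cap V\ne\emptyset\}\cup\{\{x\}\mid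 x\in\mathit{VI}\setminus V\}$. *)

From mathcomp Require Import all_boot.
From Stdlib Require List.
Set Implicit Arguments. Unset Strict Implicit. Unset Printing Implicit Defensive.

Section SharingDefs.
Variable VI : finType.

(* SG = nonempty subsets of VI; an element of SH is a set of elements of SG,
   i.e. a set of subsets of VI not containing the empty set. *)
Definition isSH (sh : {set {set VI}}) : Prop := set0 \notin sh.

Definition rhoTSD (k : nat) (sh : {set {set VI}}) : {set {set VI}} :=
  [set S : {set VI} | (S != set0) &&
     [forall T : {set VI}, ((T \subset S) && (#|T| < k)) ==>
        (S == \bigcup_(U in sh | (T \subset U) && (U \subset S)) U)]].

Inductive term : Type := Var of VI | Fn of nat & seq term.

Fixpoint vars_seq (t : term) : seq VI :=
  match t with
  | Var x => [:: x]
  | Fn _ ts => flatten (map vars_seq ts)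
  end.

Definition vars (t : term) : {set VI} := [set x | x \in vars_seq t].

Definition binding := (VI * term)%type.

Definition is_subst (sigma : seq binding) : Prop :=
  [/\ uniq (map fst sigma),
       (forall b, List.In b sigma -> b.2 <> Var b.1)
     & (forall b1 b2, List.In b1 sigma -> List.In b2 sigma ->
          b1.1 \notin vars b2.2)].
(* conjuncts: a finite function (each variable bound at most once);
   each binding x |-> t has t <> x; idempotence (no domain variable
   occurs in any bound term). *)

Definition bin (sh1 sh2 : {set {set VI}}) : {set {set VI}} :=
  [set S1 :|: S2 | S1 in sh1, S2 in sh2].

Definition star (sh : {set {set VI}}) : {set {set VI}} :=
  [set S : {set VI} | (S != set0) &&
     [exists sh' : {set {set VI}}, (sh' \subset sh) && (S == \bigcup_(U in sh') U)]].

Definition rel (V : {set VI}) (sh : {set {set VI}}) : {set {set VI}} :=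
  [set S in sh | S :&: V != set0].

Definition amgu1 (sh : {set {set VI}}) (b : binding) : {set {set VI}} :=
  let vx := [set b.1] in
  let vt := vars b.2 in
  (sh :\: rel (vx :|: vt) sh) :|: bin (star (rel vx sh)) (star (rel vt sh)).

(* amgu on a substitution: bindings processed one at a time, in list order.
   Quantifying over all lists covers every order of selection. *)
Definition amgu (sh : {set {set VI}}) (sigma : seq binding) : {set {set VI}} :=
  foldl amgu1 sh sigma.

Definition proj (sh : {set {set VI}}) (V : {set VI}) : {set {set VI}} :=
  [set S :&: V | S in sh & S :&: V != set0] :|: [set [set x] | x in ~: V].

End SharingDefs.

(* Call A "TSD_k-below" B when every nonempty group of A lies in rho_k(B).
   Since rho_k is a closure operator, this holds exactly when
   rho_k(A) is contained in rho_k(B), so it suffices to show that amgu, union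
   and projection are monotone for this preorder.  For a binding x |-> t, a group S = A u B of amgu(sh1) with A, B
   unions of x-relevant and t-relevant groups of sh1 is matched in amgu(sh2)
   by the union of all x-relevant and all t-relevant groups of sh2 inside S:
   for k >= 2 every point of S is covered by such groups (apply the hypothesis
   to a relevant point together with the point to cover), so that union is S
   itself; for k = 1 membership in rho_1 only asks for a cover of S by groups
   contained in S, and each point is covered either by a group of sh2 that
   amgu leaves untouched or by that union. *)
From Pilot Require Import Defs.
From mathcomp Require Import all_boot zify.

Set Implicit Arguments.
Unset Strict Implicit.
Unset Printing Implicit Defensive.

Section TSD.
Variable VI : finType.
Implicit Types (sh A B G : {set {set VI}}) (C S T U V W X : {set VI}).

Lemma rhoTSDP k sh S : reflect
  (S != set0 /\ forall T, T \subset S -> T != set0 -> #|T| <= k ->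
     exists2 U, U \in sh & (T \subset U) && (U \subset S))
  (S \in rhoTSD k sh).
Proof.
apply: (iffP idP).
- rewrite inE => /andP [Sn0 /forallP H]; split => // T TS Tn Tk.
  case/set0Pn: Tn => y yT.
  have := H (T :\ y); rewrite (subset_trans (subD1set T y) TS) /=.
  have -> : #|T :\ y| < k by move: Tk; rewrite (cardsD1 y T) yT add1n.
  move=> /implyP /(_ isT) /eqP SE.
  have : y \in S by exact: (subsetP TS).
  rewrite {1}SE => /bigcupP [U /andP [Ush /andP [TU US]] yU].
  exists U => //; rewrite US andbT.
  apply/subsetP => z zT; case: (eqVneq z y) => [->//|zy].
  by apply: (subsetP TU); rewrite !inE zy.
- move=> [Sn0 H]; rewrite inE Sn0 /=; apply/forallP => T.
  apply/implyP => /andP [TS Tk]; rewrite eqEsubset; apply/andP; split.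
  + apply/subsetP => y yS.
    have [U Ush /andP [TU US]] :
        exists2 U, U \in sh & (y |: T \subset U) && (U \subset S).
      apply: H.
      * by rewrite subUset sub1set yS TS.
      * by apply/set0Pn; exists y; rewrite !inE eqxx.
      * by rewrite cardsU1; have := leq_b1 (y \notin T); lia.
    apply/bigcupP; exists U; last by apply: (subsetP TU); rewrite !inE eqxx.
    by rewrite Ush US (subset_trans (subsetUr _ _) TU).
  + by apply/bigcupsP => U /andP [_ /andP [_ US]].
Qed.

Lemma mem_rhoTSD k sh S : S \in sh -> S != set0 -> S \in rhoTSD k sh.
Proof.
by move=> Ssh Sn0; apply/rhoTSDP; split => // T TS _ _; exists S; rewrite ?TS ?subxx.
Qed.

Lemma mem_rhoTSD1 sh S : S != set0 ->
  (forall y, y \in S -> exists2 U, U \in sh & (y \in U) && (U \subset S)) ->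
  S \in rhoTSD 1 sh.
Proof.
move=> Sn0 H; apply/rhoTSDP; split => // T TS Tn0 T1.
have /cards1P [y Ty] : #|T| == 1 by rewrite eqn_leq T1 card_gt0.
have [|U Ush /andP [yU US]] := H y; first by rewrite -sub1set -Ty.
by exists U; rewrite // Ty sub1set yU.
Qed.

Lemma rhoTSDS k sh1 sh2 : sh1 \subset sh2 -> rhoTSD k sh1 \subset rhoTSD k sh2.
Proof.
move=> sub12; apply/subsetP => S /rhoTSDP [Sn0 HS]; apply/rhoTSDP.
split => // T TS Tn0 Tk; have [U Ush TUS] := HS T TS Tn0 Tk.
by exists U; first exact: (subsetP sub12).
Qed.

Definition tsd_sub k A B := {in A, forall S, S != set0 -> S \in rhoTSD k B}.

Section Preorder.
Variable k : nat.

Lemma tsd_sub_cover A B C T : tsd_sub k A B -> C \in A ->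
  T \subset C -> T != set0 -> #|T| <= k ->
  exists2 U, U \in B & (T \subset U) && (U \subset C).
Proof.
move=> AB CA TC Tn0 Tk; have Cn0 : C != set0.
  by apply: contraNneq Tn0 => C0; rewrite -subset0 -C0.
by have /rhoTSDP [_] := AB C CA Cn0; apply.
Qed.

Lemma tsd_sub_rhoS A B : tsd_sub k A B -> rhoTSD k A \subset rhoTSD k B.
Proof.
move=> AB; apply/subsetP => S /rhoTSDP [Sn0 HS]; apply/rhoTSDP.
split => // T TS Tn0 Tk; have [U UA /andP [TU US]] := HS T TS Tn0 Tk.
have [W WB /andP [TW WU]] := tsd_sub_cover AB UA TU Tn0 Tk.
by exists W; rewrite // TW (subset_trans WU US).
Qed.

Lemma rhoS_tsd_sub A B : rhoTSD k A \subset rhoTSD k B -> tsd_sub k A B.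
Proof. by move=> /subsetP AB S SA Sn0; apply/AB/mem_rhoTSD. Qed.

Lemma tsd_subW A B B' : tsd_sub k A B -> B \subset B' -> tsd_sub k A B'.
Proof. by move=> AB /(rhoTSDS k) /subsetP BB' S SA Sn0; apply/BB'/AB. Qed.

Lemma tsd_subU A A' B : tsd_sub k A B -> tsd_sub k A' B -> tsd_sub k (A :|: A') B.
Proof. by move=> AB A'B S; rewrite inE => /orP [/AB | /A'B]. Qed.

Lemma rhoTSD_congr (F : {set {set VI}} -> {set {set VI}}) A B :
  rhoTSD k A = rhoTSD k B ->
  (forall A B, tsd_sub k A B -> tsd_sub k (F A) (F B)) ->
  rhoTSD k (F A) = rhoTSD k (F B).
Proof.
move=> AB Fmono; apply/eqP; rewrite eqEsubset !tsd_sub_rhoS //;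
  by apply/Fmono/rhoS_tsd_sub; rewrite AB.
Qed.

Lemma tsd_sub_setUl A B sh : tsd_sub k A B -> tsd_sub k (sh :|: A) (sh :|: B).
Proof.
move=> AB; apply: tsd_subU; last exact: tsd_subW AB (subsetUr _ _).
by move=> S Ssh; apply: mem_rhoTSD; rewrite inE Ssh.
Qed.

Lemma tsd_sub_proj A B V : tsd_sub k A B -> tsd_sub k (proj A V) (proj B V).
Proof.
move=> AB; apply: tsd_subU; last first.
  by move=> S SV; apply: mem_rhoTSD; rewrite inE SV orbT.
move=> _ /imsetP [W /setIdP [WA WVn0] ->] _; apply/rhoTSDP; split => // T.
rewrite subsetI => /andP [TW TV] Tn0 Tk.
have [U UB /andP [TU UW]] := tsd_sub_cover AB WA TW Tn0 Tk.
have UVn0 : U :&: V != set0.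
  by apply: contraNneq Tn0 => UV0; rewrite -subset0 -UV0 subsetI TU TV.
exists (U :&: V); last by rewrite subsetI TU TV setSI.
by rewrite inE; apply/orP; left; apply/imsetP; exists U; rewrite ?inE ?UB.
Qed.

Lemma tsd_sub_setD_rel A B W : tsd_sub k A B ->
  tsd_sub k (A :\: Defs.rel W A) (B :\: Defs.rel W B).
Proof.
move=> AB S /setDP [SA]; rewrite inE SA negbK => /eqP SW0 Sn0.
have /rhoTSDP [_ HS] := AB S SA Sn0; apply/rhoTSDP; split => // T TS Tn0 Tk.
have [U UB /andP [TU US]] := HS T TS Tn0 Tk.
exists U; rewrite ?TU ?US // !inE UB andbT negbK -subset0 -SW0.
exact: setSI.
Qed.

(* Adding a point of C :&: V to T is what makes the covering group V-relevant. *)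
Lemma tsd_sub_cover_rel A B C V T : tsd_sub k A B ->
  C \in Defs.rel V A -> T \subset C -> #|T| < k ->
  exists2 U, U \in Defs.rel V B & (T \subset U) && (U \subset C).
Proof.
move=> AB /setIdP [CA /set0Pn [a /setIP [aC aV]]] TC Tk.
have aTC : a |: T \subset C by rewrite subUset sub1set aC TC.
have aTn0 : a |: T != set0 by apply/set0Pn; exists a; rewrite !inE eqxx.
have aTk : #|a |: T| <= k by rewrite cardsU1; have := leq_b1 (a \notin T); lia.
have [U UB /andP [aTU UC]] := tsd_sub_cover AB CA aTC aTn0 aTk.
have aU : a \in U by apply: (subsetP aTU); rewrite !inE eqxx.
exists U; last by rewrite UC (subset_trans (subsetUr _ _) aTU).
by rewrite inE UB; apply/set0Pn; exists a; rewrite inE aU.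
Qed.

End Preorder.

Lemma star_cover sh S : S \in star sh ->
  S != set0 /\ forall y, y \in S -> exists2 C, C \in sh & (y \in C) && (C \subset S).
Proof.
rewrite inE => /andP [Sn0 /existsP [G /andP [Gsh /eqP SE]]]; split => // y.
rewrite SE => /bigcupP [C CG yC].
by exists C; rewrite ?(subsetP Gsh) ?yC ?SE ?bigcup_sup.
Qed.

Lemma bigcup_star sh G : G \subset sh ->
  \bigcup_(U in G) U != set0 -> \bigcup_(U in G) U \in star sh.
Proof.
by move=> Gsh Gn0; rewrite inE Gn0 /=; apply/existsP; exists G; rewrite Gsh eqxx.
Qed.

Definition relcup V sh S := \bigcup_(U in [set U in Defs.rel V sh | U \subset S]) U.

Lemma relcup_sub V sh S : relcup V sh S \subset S.
Proof. by apply/bigcupsP => U; rewrite inE => /andP []. Qed.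

Lemma sub_relcup V sh S U :
  U \in Defs.rel V sh -> U \subset S -> U \subset relcup V sh S.
Proof. by move=> UV US; apply: bigcup_sup; rewrite inE UV. Qed.

Section Amgu.
Variables (k : nat) (sh1 sh2 : {set {set VI}}).
Hypotheses (k_gt0 : 0 < k) (sh12 : tsd_sub k sh1 sh2).

Lemma relcup_star V X S : X \in star (Defs.rel V sh1) -> X \subset S ->
  relcup V sh2 S \in star (Defs.rel V sh2).
Proof.
move=> /star_cover [/set0Pn [a aX] HX] XS.
apply: bigcup_star; first by apply/subsetP => U; rewrite inE => /andP [].
have [C CV /andP [_ CX]] := HX a aX.
have k0 : #|(set0 : {set VI})| < k by rewrite cards0.
have [U UV /andP [_ UC]] := tsd_sub_cover_rel sh12 CV (sub0set C) k0.
have /set0Pn [z /setIP [zU _]] : U :&: V != set0 by move: UV; rewrite inE => /andP [].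
apply/set0Pn; exists z; apply: (subsetP (sub_relcup UV _)) zU.
by rewrite (subset_trans UC) ?(subset_trans CX).
Qed.

Lemma star_sub_relcup V X S : 1 < k ->
  X \in star (Defs.rel V sh1) -> X \subset S -> X \subset relcup V sh2 S.
Proof.
move=> k_gt1 /star_cover [_ HX] XS; apply/subsetP => y yX.
have [C CV /andP [yC CX]] := HX y yX.
have yC1 : [set y] \subset C by rewrite sub1set.
have y_lt_k : #|[set y]| < k by rewrite cards1.
have [U UV /andP [yU UC]] := tsd_sub_cover_rel sh12 CV yC1 y_lt_k.
apply: (subsetP (sub_relcup UV _)); last by rewrite -sub1set.
by rewrite (subset_trans UC) ?(subset_trans CX).
Qed.

Lemma tsd_sub_amgu1_bin b :
  tsd_sub k (bin (star (Defs.rel [set b.1] sh1)) (star (Defs.rel (vars b.2) sh1)))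
            (amgu1 sh2 b).
Proof.
set vx := [set b.1]; set vt := vars b.2.
move=> _ /imset2P [X Y Xst Yst ->]; set S := X :|: Y => Sn0.
set S' := relcup vx sh2 S :|: relcup vt sh2 S.
have S'_amgu : S' \in amgu1 sh2 b.
  rewrite inE; apply/orP; right; apply: imset2_f.
  - exact: relcup_star Xst (subsetUl _ _).
  - exact: relcup_star Yst (subsetUr _ _).
have S'S : S' \subset S by rewrite subUset !relcup_sub.
have [k_gt1 | k_le1] := ltnP 1 k.
  have SS' : S \subset S'.
    by rewrite setUSS // star_sub_relcup // ?subsetUl ?subsetUr.
  have SE : S = S' by apply/eqP; rewrite eqEsubset SS' S'S.
  by rewrite SE in Sn0 *; apply: mem_rhoTSD.
have cover_sh1 y : y \in S -> exists2 C, C \in sh1 & (y \in C) && (C \subset S).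
  have cover Z V : Z \in star (Defs.rel V sh1) -> Z \subset S -> y \in Z ->
      exists2 C, C \in sh1 & (y \in C) && (C \subset S).
    move=> /star_cover [_ HZ] ZS /HZ [C /setIdP [Csh _] /andP [yC CZ]].
    by exists C; rewrite ?yC ?(subset_trans CZ ZS).
  rewrite inE => /orP [yX | yY]; first exact: cover Xst (subsetUl _ _) yX.
  exact: cover Yst (subsetUr _ _) yY.
rewrite (_ : k = 1); last by lia.
apply: mem_rhoTSD1 => // y /cover_sh1 [C Csh /andP [yC CS]].
have yC1 : [set y] \subset C by rewrite sub1set.
have y_neq0 : [set y] != set0 by apply/set0Pn; exists y; rewrite inE.
have y_le_k : #|[set y]| <= k by rewrite cards1.
have [U Ush /andP [yU UC]] := tsd_sub_cover sh12 Csh yC1 y_neq0 y_le_k.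
rewrite sub1set in yU; have US := subset_trans UC CS.
have [UV0 | UVn0] := eqVneq (U :&: (vx :|: vt)) set0.
  by exists U; rewrite ?yU ?US // !inE Ush UV0 eqxx.
exists S' => //; rewrite S'S andbT (subsetP _ y yU) //.
move: UVn0; rewrite setIUr setU_eq0 negb_and => /orP [UVx | UVt].
- by rewrite (subset_trans _ (subsetUl _ _)) // sub_relcup // inE Ush.
- by rewrite (subset_trans _ (subsetUr _ _)) // sub_relcup // inE Ush.
Qed.

Lemma tsd_sub_amgu1 b : tsd_sub k (amgu1 sh1 b) (amgu1 sh2 b).
Proof.
apply: tsd_subU; last exact: tsd_sub_amgu1_bin.
move/tsd_subW: (tsd_sub_setD_rel (W := b.1 |: vars b.2) sh12).
by apply; rewrite subsetUl.
Qed.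

End Amgu.

Lemma tsd_sub_amgu k sh1 sh2 sigma : 0 < k -> tsd_sub k sh1 sh2 ->
  tsd_sub k (amgu sh1 sigma) (amgu sh2 sigma).
Proof.
move=> k_gt0; elim: sigma sh1 sh2 => //= b sigma IH sh1 sh2 sh12.
exact/IH/tsd_sub_amgu1.
Qed.

End TSD.

Theorem theorem3p16 (VI : finType) (k : nat) (sh1 sh2 : {set {set VI}}) :
  isSH sh1 -> isSH sh2 -> 1 <= k <= #|VI| ->
  rhoTSD k sh1 = rhoTSD k sh2 ->
  (forall sigma : seq (binding VI), is_subst sigma ->
     rhoTSD k (amgu sh1 sigma) = rhoTSD k (amgu sh2 sigma)) /\
  (forall sh' : {set {set VI}}, isSH sh' ->
     rhoTSD k (sh' :|: sh1) = rhoTSD k (sh' :|: sh2)) /\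
  (forall V : {set VI},
     rhoTSD k (proj sh1 V) = rhoTSD k (proj sh2 V)).
Proof.
move=> _ _ /andP [k_gt0 _] E; split; [|split].
- move=> sigma _; apply: (rhoTSD_congr (F := fun sh => amgu sh sigma) E).
  by move=> A B; apply: tsd_sub_amgu.
- move=> sh' _; apply: (rhoTSD_congr (F := setU sh') E).
  by move=> A B; apply: tsd_sub_setUl.
- move=> V; apply: (rhoTSD_congr (F := fun sh => proj sh V) E).
  by move=> A B; apply: tsd_sub_proj.
Qed.
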